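(* Let $\alpha\in[0,\pi/2)$ and let $P,C$ be causal stable systems on $\mathcal{L}_{2e+}^n$ with $\theta(P)\le\alpha$ and $\theta(C)\le\alpha$, such that the feedback system $P\#C$ is well-posed. Let $G:e_1\mapsto y_1$ be the closed-loop map of $P\#C|_{e_2=0}$. Then $G$ is stable and $\theta(G)\le\alpha$.
   Context: For $n\ge1$, $\mathcal{L}_2^n$ is the set of measurable $u:\mathbb{R}\to\mathbb{R}^n$ with $\|u\|_2^2=\int|u(t)|^2dt<\infty$, inner product $\langle u,v\rangle=\int u(t)^Tv(t)\,dt$; $\mathcal{L}_{2+}=\{u\in\mathcal{L}_2:u(t)=0\ \text{for}\ t<0\}$. For $T\ge0$, $(\Gamma_Tu)(t)=u(t)$ for $t\le T$, $0$ for $t>T$; $\mathcal{L}_{2e+}=\{u:\Gamma_Tu\in\mathcal{L}_{2+}\ \forall T\ge0\}$. A system is an operator $P:\mathcal{L}_{2e+}\to\mathcal{L}_{2e+}$ with $P0=0$, $P\ne0$; causal if $\Gamma_TP=\Gamma_TP\Gamma_T$ for all $T\ge 0$; a causal system is stable if $Pu\in\mathcal{L}_{2+}$ for all $u\in\mathcal{L}_{2+}$ and $\sup_{0\ne u\in\mathcal{L}_{2+}}\|Pu\|_2/\|u\|_2<\infty$. The singular angle $\theta(P)\in[0,\pi]$ is given by $\cos\theta(P)=\inf\{\langle u,Pu\rangle/(\|u\|_2\|Pu\|_2):0\neq u\in\mathcal{L}_{2+},\ Pu\ne0\}$. The feedback system $P\#C$: $u_1=e_1-y_2$, $u_2=e_2+y_1$,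 $y_1=Pu_1$, $y_2=Cu_2$; it is well-posed if $(u_1,u_2)\mapsto(u_1+Cu_2,\ u_2-Pu_1)$ has a causal inverse on $\mathcal{L}_{2e+}\times\mathcal{L}_{2e+}$. $P\#C|_{e_2=0}$ denotes the loop with $e_2=0$. *)

From HB Require Import structures.
From mathcomp Require Import all_boot all_order all_algebra.
From mathcomp Require Import all_classical all_reals all_analysis.
Set Implicit Arguments. Unset Strict Implicit. Unset Printing Implicit Defensive.
Import Order.TTheory GRing.Theory Num.Theory.
Local Open Scope classical_set_scope.
Local Open Scope ring_scope.

Section Signals.
Variables (R : realType) (n : nat).

Definition signal := R -> 'I_n -> R.

Definition sig0 : signal := fun _ _ => 0.

Definition vdot (x y : 'I_n -> R) : R := \sum_(i < n) x i * y i.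

Definition sig_measurable (u : signal) : Prop :=
  forall i : 'I_n, measurable_fun setT (fun t : R => u t i).

Definition energy (u : signal) : \bar R :=
  (\int[@lebesgue_measure R]_(t in setT) (vdot (u t) (u t))%:E)%E.

Definition L2 (u : signal) : Prop := sig_measurable u /\ (energy u < +oo)%E.

Definition L2p (u : signal) : Prop := L2 u /\ (forall t : R, t < 0 -> u t = 0).

Definition trunc (T : R) (u : signal) : signal :=
  fun t => if t <= T then u t else 0.

Definition L2ep (u : signal) : Prop := forall T : R, 0 <= T -> L2p (trunc T u).

Definition norm2 (u : signal) : R := Num.sqrt (fine (energy u)).
Definition inner (u v : signal) : R :=
  Rintegral (@lebesgue_measure R) setT (fun t => vdot (u t) (v t)).

(* u is a nonzero element of L_2 (i.e. nonzero as an equivalence class) *)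
Definition nonzero (u : signal) : Prop := norm2 u != 0.

Definition is_system (P : signal -> signal) : Prop :=
  [/\ (forall u, L2ep u -> L2ep (P u)),
      P sig0 = sig0 &
      exists u, L2ep u /\ exists T, 0 <= T /\ nonzero (trunc T (P u))].

Definition causal (P : signal -> signal) : Prop :=
  forall T u, 0 <= T -> L2ep u -> trunc T (P u) = trunc T (P (trunc T u)).

Definition stable (P : signal -> signal) : Prop :=
  [/\ is_system P, causal P,
      (forall u, L2p u -> L2p (P u)) &
      exists M : R, forall u, L2p u -> nonzero u -> norm2 (P u) / norm2 u <= M].

Definition angle_ratios (P : signal -> signal) : set R :=
  [set r | exists u, [/\ L2p u, nonzero u, nonzero (P u) &
                        r = inner u (P u) / (norm2 u * norm2 (P u))]].

Definition singular_angle (P : signal -> signal) : R := acos (inf (angle_ratios P)).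

Definition trunc2 (T : R) (w : signal * signal) : signal * signal :=
  (trunc T w.1, trunc T w.2).
Definition L2ep2 (w : signal * signal) : Prop := L2ep w.1 /\ L2ep w.2.

Definition loop_map (P C : signal -> signal) (w : signal * signal) : signal * signal :=
  (fun t i => w.1 t i + C w.2 t i, fun t i => w.2 t i - P w.1 t i).

Definition causal_inverse_of (P C : signal -> signal)
    (Finv : signal * signal -> signal * signal) : Prop :=
  [/\ (forall w, L2ep2 w -> L2ep2 (Finv w)),
      (forall w, L2ep2 w -> loop_map P C (Finv w) = w),
      (forall w, L2ep2 w -> Finv (loop_map P C w) = w) &
      (forall T w, 0 <= T -> L2ep2 w -> trunc2 T (Finv w) = trunc2 T (Finv (trunc2 T w)))].

Definition well_posed (P C : signal -> signal) : Prop :=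
  exists Finv, causal_inverse_of P C Finv.

Definition closed_loop (P : signal -> signal)
    (Finv : signal * signal -> signal * signal) : signal -> signal :=
  fun e1 => P (Finv (e1, sig0)).1.

End Signals.

From mathcomp Require Import all_boot all_order all_algebra.
From mathcomp Require Import all_classical all_reals all_analysis.
From mathcomp Require Import measurable_realfun ring lra.
Set Implicit Arguments. Unset Strict Implicit. Unset Printing Implicit Defensive.
Import Order.TTheory GRing.Theory Num.Theory.
Import numFieldNormedType.Exports.
Local Open Scope classical_set_scope.
Local Open Scope ring_scope.

(* Write [u] for the input of [P] in the loop, so that [e = u + C y] with [y = P u = G e].
   The cone conditions [<u, y> >= cos alpha |u| |y|] and [<C y, y> >= cos alpha |y| |C y|]
   add up, by the triangle inequality, to [<e, y> >= cos alpha |e| |y|], which is the angle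
   bound for [G]. Keeping only the first one, Cauchy-Schwarz gives [cos alpha |u| <= |e|],
   so [G] has finite gain. Since [u] is a priori only in L2e+, this last estimate is first
   proved for the truncations of [u], using causality of [P] and [C], and then passed to the
   limit by monotone convergence. *)

Section VectorDot.
Variables (R : realType) (n : nat).
Implicit Types x y z : 'I_n -> R.

Lemma vdot_ge0 x : 0 <= vdot x x.
Proof. by apply: sumr_ge0 => i _; rewrite -expr2 sqr_ge0. Qed.

Lemma vdotC x y : vdot x y = vdot y x.
Proof. by apply: eq_bigr => i _; rewrite mulrC. Qed.

Lemma vdotr0 x : vdot x (fun _ => 0) = 0.
Proof. by apply: big1 => i _; rewrite mulr0. Qed.

Lemma vdotDl x y z : vdot (fun i => x i + y i) z = vdot x z + vdot y z.
Proof. by rewrite /vdot -big_split; apply: eq_bigr => i _; rewrite mulrDl. Qed.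

Lemma vdotNl x y : vdot (fun i => - x i) y = - vdot x y.
Proof. by rewrite /vdot -sumrN; apply: eq_bigr => i _; rewrite mulNr. Qed.

Lemma vdot_amgm x y a : 0 < a -> 2 * vdot x y <= a * vdot x x + a^-1 * vdot y y.
Proof.
move=> a_gt0; rewrite /vdot !mulr_sumr -big_split; apply: ler_sum => i _ /=.
have a_neq0 : a != 0 by rewrite gt_eqF.
have -> : a * (x i * x i) + a^-1 * (y i * y i)
        = 2 * (x i * y i) + a^-1 * (a * x i - y i) ^+ 2 by field.
rewrite lerDl; apply: mulr_ge0; last exact: sqr_ge0.
by rewrite invr_ge0 ltW.
Qed.

Lemma normr_vdot_amgm x y a : 0 < a ->
  2 * `|vdot x y| <= a * vdot x x + a^-1 * vdot y y.
Proof.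
move=> a_gt0; have [vdot_ge0|vdot_lt0] := lerP 0 (vdot x y).
  by rewrite ger0_norm //; exact: vdot_amgm.
rewrite ltr0_norm // -vdotNl.
have <- : vdot (fun i => - x i) (fun i => - x i) = vdot x x.
  by rewrite vdotNl vdotC vdotNl opprK.
exact: vdot_amgm.
Qed.

Lemma normr_vdot_le x y : `|vdot x y| <= vdot x x + vdot y y.
Proof.
have := normr_vdot_amgm x y ltr01; rewrite invr1 !mul1r.
have := normr_ge0 (vdot x y); lra.
Qed.

Lemma vdotDD_le x y :
  vdot (fun i => x i + y i) (fun i => x i + y i) <= 2 * vdot x x + 2 * vdot y y.
Proof.
rewrite vdotDl (vdotC x) (vdotC y) !vdotDl (vdotC y x).
have := vdot_amgm x y ltr01; rewrite invr1 !mul1r; lra.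
Qed.

End VectorDot.

(* The optimal weight is [a = B / A]; perturbing [A] and [B] by [eps] avoids dividing by zero. *)
Lemma le_mul_of_amgm (R : realFieldType) (X A B : R) : 0 <= A -> 0 <= B ->
  (forall a, 0 < a -> 2 * X <= a * A ^+ 2 + a^-1 * B ^+ 2) -> X <= A * B.
Proof.
move=> A_ge0 B_ge0 amgm; apply/ler_addgt0Pr => e e_gt0.
have S_gt0 : 0 < A + B + 1 by lra.
pose eps := e / (A + B + 1).
have eps_gt0 : 0 < eps by rewrite divr_gt0.
have epsAB : eps * (A + B) <= e by rewrite /eps mulrAC ler_pdivrMr //; nra.
pose p := A + eps; pose q := B + eps.
have p_gt0 : 0 < p by rewrite /p; lra.
have q_gt0 : 0 < q by rewrite /q; lra.
have := amgm (q / p) (divr_gt0 q_gt0 p_gt0); rewrite invf_div.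
have hA : q / p * A ^+ 2 <= q * A.
  rewrite mulrAC ler_pdivrMr // -mulrA ler_wpM2l ?(ltW q_gt0) // expr2 ler_wpM2l //.
  by rewrite /p; lra.
have hB : p / q * B ^+ 2 <= p * B.
  rewrite mulrAC ler_pdivrMr // -mulrA ler_wpM2l ?(ltW p_gt0) // expr2 ler_wpM2l //.
  by rewrite /q; lra.
move: hA hB; rewrite /p /q; nra.
Qed.

Section Integrability.
Context d (T : measurableType d) (R : realType) (mu : {measure set T -> \bar R}).
Variable D : set T.
Hypothesis mD : measurable D.
Implicit Types f g : T -> R.

Lemma integrableZl_EFin f k : mu.-integrable D (EFin \o f) ->
  mu.-integrable D (EFin \o (fun t => k * f t)).
Proof. exact: integrableZl. Qed.

Lemma integrableD_EFin f g : mu.-integrable D (EFin \o f) ->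
  mu.-integrable D (EFin \o g) -> mu.-integrable D (EFin \o (fun t => f t + g t)).
Proof. exact: integrableD. Qed.

End Integrability.

Section SignalSpace.
Variables (R : realType) (n : nat).
Local Notation signal := (signal R n).
Local Notation sig0 := (@sig0 R n).
Local Notation mu := (@lebesgue_measure R).
Implicit Types (u v : signal) (T : R).

Definition sig_add u v : signal := fun t i => u t i + v t i.

Definition sqnorm u : R -> R := fun t => vdot (u t) (u t).

Lemma trunc_indicE T u t i : trunc T u t i = \1_(`]-oo, T]) t * u t i.
Proof.
rewrite /trunc indicE; case: ifP => tT.
  by rewrite mem_set ?mul1r //= in_itv /= tT.
by rewrite memNset ?mul0r //= in_itv /= tT.
Qed.

Lemma trunc_add T u v : trunc T (sig_add u v) = sig_add (trunc T u) (trunc T v).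
Proof.
apply/funext => t; rewrite /trunc /sig_add; case: (t <= T) => //.
by apply/funext => i /=; rewrite addr0.
Qed.

Lemma trunc_sig0 T : trunc T sig0 = sig0.
Proof. by apply/funext => t; rewrite /trunc; case: (t <= T). Qed.

Lemma sqnorm_trunc T u t : sqnorm (trunc T u) t = if t <= T then sqnorm u t else 0.
Proof. by rewrite /sqnorm /trunc; case: (t <= T); rewrite ?vdotr0. Qed.

Lemma sig_measurable0 : sig_measurable sig0.
Proof. by move=> i; exact: measurable_cst. Qed.

Lemma sig_measurable_trunc T u : sig_measurable u -> sig_measurable (trunc T u).
Proof.
move=> mu_ i; under eq_fun do rewrite trunc_indicE.
by apply: measurable_funM => //; exact: measurable_indic.
Qed.

Lemma sig_measurable_add u v :
  sig_measurable u -> sig_measurable v -> sig_measurable (sig_add u v).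
Proof. by move=> mu_ mv i; apply: measurable_funD. Qed.

Lemma measurable_vdot u v : sig_measurable u -> sig_measurable v ->
  measurable_fun setT (fun t => vdot (u t) (v t)).
Proof. by move=> mu_ mv; apply: measurable_sum => i; apply: measurable_funM. Qed.

Lemma L2_integrable u :
  L2 u <-> sig_measurable u /\ mu.-integrable setT (EFin \o sqnorm u).
Proof.
rewrite /L2 /energy; split => -[mu_ fin_u]; split => //.
  apply/integrableP; split; first by apply/measurable_EFinP; exact: measurable_vdot.
  by under eq_integral => t _ do rewrite /= ger0_norm ?vdot_ge0 //.
move/integrableP: fin_u => [_]. 
by under eq_integral => t _ do rewrite /= ger0_norm ?vdot_ge0 //.
Qed.

Lemma integrable_vdot u v : L2 u -> L2 v ->
  mu.-integrable setT (EFin \o (fun t => vdot (u t) (v t))).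
Proof.
move=> /L2_integrable [mu_ iu] /L2_integrable [mv iv].
apply: (@le_integrable _ _ _ mu setT measurableT _ (EFin \o (fun t => sqnorm u t + sqnorm v t))).
- by apply/measurable_EFinP; exact: measurable_vdot.
- move=> t _ /=; rewrite lee_fin (ger0_norm (addr_ge0 (vdot_ge0 _) (vdot_ge0 _))).
  exact: normr_vdot_le.
- exact: integrableD_EFin measurableT _ _ iu iv.
Qed.

Lemma L2_sig0 : L2 sig0.
Proof.
split; first exact: sig_measurable0.
by rewrite /energy; under eq_integral => t _ do rewrite vdotr0; rewrite integral0.
Qed.

Lemma L2_add u v : L2 u -> L2 v -> L2 (sig_add u v).
Proof.
move=> /[dup] L2u /L2_integrable [mu_ iu] /[dup] L2v /L2_integrable [mv iv].
apply/L2_integrable; split; first exact: sig_measurable_add.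
apply: (@le_integrable _ _ _ mu setT measurableT _
   (EFin \o (fun t => 2 * sqnorm u t + 2 * sqnorm v t))).
- by apply/measurable_EFinP; apply: measurable_vdot; exact: sig_measurable_add.
- move=> t _ /=; rewrite lee_fin (ger0_norm (vdot_ge0 _)) ger0_norm.
    exact: vdotDD_le.
  by rewrite addr_ge0 // mulr_ge0 // vdot_ge0.
- by apply: (integrableD_EFin measurableT); apply: (integrableZl_EFin measurableT).
Qed.

Lemma L2_trunc T u : L2 u -> L2 (trunc T u).
Proof.
move=> /L2_integrable [mu_ iu]; apply/L2_integrable.
split; first exact: sig_measurable_trunc.
apply: (@le_integrable _ _ _ mu setT measurableT _ (EFin \o sqnorm u)) => //.
  by apply/measurable_EFinP; apply: measurable_vdot; exact: sig_measurable_trunc.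
move=> t _ /=; rewrite lee_fin sqnorm_trunc.
by case: ifP => _; rewrite ?normr0 // normr_ge0.
Qed.

Lemma L2p_sig0 : L2p sig0.
Proof. by split; [exact: L2_sig0|]. Qed.

Lemma L2p_add u v : L2p u -> L2p v -> L2p (sig_add u v).
Proof.
move=> [L2u u_causal] [L2v v_causal]; split; first exact: L2_add.
by move=> t t_lt0; rewrite /sig_add u_causal // v_causal //; apply/funext => i; rewrite addr0.
Qed.

Lemma L2p_trunc T u : L2p u -> L2p (trunc T u).
Proof.
move=> [L2u u_causal]; split; first exact: L2_trunc.
by move=> t t_lt0; rewrite /trunc; case: ifP => // _; rewrite u_causal.
Qed.

Lemma L2p_L2ep u : L2p u -> L2ep u.
Proof. by move=> L2pu T _; exact: L2p_trunc. Qed.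

Lemma L2ep_sig0 : L2ep sig0.
Proof. exact/L2p_L2ep/L2p_sig0. Qed.

End SignalSpace.

Arguments L2ep_sig0 {R n}.

Section InnerProduct.
Variables (R : realType) (n : nat).
Local Notation signal := (signal R n).
Local Notation mu := (@lebesgue_measure R).
Implicit Types (u v w : signal) (T : R).

Lemma innerC u v : inner u v = inner v u.
Proof. by apply: eq_Rintegral => t _; rewrite vdotC. Qed.

Lemma innerDl u v w : L2 u -> L2 v -> L2 w ->
  inner (sig_add u v) w = inner u w + inner v w.
Proof.
move=> L2u L2v L2w; rewrite /inner -RintegralD //; try exact: integrable_vdot.
by apply: eq_Rintegral => t _; rewrite vdotDl.
Qed.

Lemma inner_truncl T u v : inner (trunc T u) v = inner (trunc T u) (trunc T v).
Proof.
apply: eq_Rintegral => t _; rewrite /trunc.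
by case: (t <= T) => //; rewrite vdotC !vdotr0.
Qed.

Lemma inner_truncr T u v : inner u (trunc T v) = inner (trunc T u) (trunc T v).
Proof. by rewrite innerC inner_truncl innerC. Qed.

Lemma norm2_ge0 u : 0 <= norm2 u.
Proof. exact: sqrtr_ge0. Qed.

Lemma norm2_sqr u : norm2 u ^+ 2 = inner u u.
Proof. by rewrite /norm2 sqr_sqrtr // Rintegral_ge0 // => t _; exact: vdot_ge0. Qed.

Lemma nonzero_gt0 u : nonzero u -> 0 < norm2 u.
Proof. by move=> nz_u; rewrite lt_def nz_u norm2_ge0. Qed.

Lemma inner_amgm u v a : L2 u -> L2 v -> 0 < a ->
  2 * `|inner u v| <= a * norm2 u ^+ 2 + a^-1 * norm2 v ^+ 2.
Proof.
move=> L2u L2v a_gt0; rewrite !norm2_sqr /inner.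
have iu := integrable_vdot L2u L2u; have iv := integrable_vdot L2v L2v.
have iuv := integrable_vdot L2u L2v.
rewrite -(RintegralZl a measurableT iu) -(RintegralZl a^-1 measurableT iv).
rewrite -(RintegralD measurableT (integrableZl_EFin measurableT a iu)
                                  (integrableZl_EFin measurableT _ iv)).
apply: le_trans (_ : 2 * Rintegral mu setT (fun t => `|vdot (u t) (v t)|) <= _).
  by rewrite ler_pM2l //; exact: le_normr_Rintegral.
rewrite -(RintegralZl 2 measurableT (integrable_norm iuv)).
apply: le_Rintegral => //.
- exact: integrableZl_EFin (integrable_norm iuv).
- exact: integrableD_EFin (integrableZl_EFin _ _ iu) (integrableZl_EFin _ _ iv).
- by move=> t _; exact: normr_vdot_amgm.
Qed.

Lemma cauchy_schwarz u v : L2 u -> L2 v -> `|inner u v| <= norm2 u * norm2 v.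
Proof.
move=> L2u L2v.
exact: le_mul_of_amgm (norm2_ge0 u) (norm2_ge0 v) (fun a => inner_amgm L2u L2v).
Qed.

Lemma inner_le u v : L2 u -> L2 v -> inner u v <= norm2 u * norm2 v.
Proof. by move=> L2u L2v; exact: le_trans (ler_norm _) (cauchy_schwarz L2u L2v). Qed.

Lemma inner_norm2_eq0 u v : L2 u -> L2 v -> norm2 u = 0 -> inner u v = 0.
Proof.
move=> L2u L2v u0; apply/eqP; rewrite -normr_le0.
by have := cauchy_schwarz L2u L2v; rewrite u0 mul0r.
Qed.

Lemma norm2D_le u v : L2 u -> L2 v -> norm2 (sig_add u v) <= norm2 u + norm2 v.
Proof.
move=> L2u L2v; have := norm2_ge0 (sig_add u v).
rewrite le_eqVlt => /orP[/eqP <-|uv_gt0]; first by rewrite addr_ge0 ?norm2_ge0.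
have L2uv := L2_add L2u L2v.
rewrite -(ler_pM2r uv_gt0) -expr2 norm2_sqr innerDl // mulrDl.
by apply: lerD; exact: inner_le.
Qed.

Lemma norm2_le_addr_null u v : L2 u -> L2 v -> norm2 v = 0 ->
  norm2 u <= norm2 (sig_add u v).
Proof.
move=> L2u L2v v0; have := norm2_ge0 u.
rewrite le_eqVlt => /orP[/eqP <-|u_gt0]; first exact: norm2_ge0.
rewrite -(ler_pM2r u_gt0) -expr2 norm2_sqr.
have <- : inner (sig_add u v) u = inner u u.
  by rewrite innerDl // (inner_norm2_eq0 L2v L2u v0) addr0.
exact: inner_le (L2_add L2u L2v) L2u.
Qed.

Lemma norm2_trunc_le T u : L2 u -> norm2 (trunc T u) <= norm2 u.
Proof.
move=> L2u; apply: ler_wsqrtr; have L2uT := L2_trunc T L2u.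
apply: (le_Rintegral measurableT (integrable_vdot L2uT L2uT) (integrable_vdot L2u L2u)).
by move=> t _; have := sqnorm_trunc T u t; rewrite /sqnorm => ->; case: ifP; rewrite ?vdot_ge0.
Qed.

End InnerProduct.

Section TruncationLimit.
Variables (R : realType) (n : nat).
Local Notation signal := (signal R n).
Local Notation mu := (@lebesgue_measure R).
Implicit Types (u : signal) (T K : R).

Lemma energyE u : L2 u -> energy u = (norm2 u ^+ 2)%:E.
Proof.
move=> [_ fin_u]; rewrite norm2_sqr /inner /Rintegral fineK //.
by rewrite ge0_fin_numE // integral_ge0 // => t _; rewrite lee_fin vdot_ge0.
Qed.

Lemma trunc_nat_near u t : \forall k \near \oo, trunc k%:R u t = u t.
Proof.
near=> k; rewrite /trunc ifT //; near: k; exact: nbhs_infty_ger.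
Unshelve. all: by end_near.
Qed.

Lemma sig_measurable_of_trunc u :
  (forall k : nat, sig_measurable (trunc k%:R u)) -> sig_measurable u.
Proof.
move=> mtrunc i.
apply: (@measurable_fun_cvg _ _ _ setT (fun k t => trunc k%:R u t i)) => [k|t _].
  exact: mtrunc.
apply: cvg_near_cst; near=> k.
by rewrite (near (trunc_nat_near u t) k).
Unshelve. all: by end_near.
Qed.

(* Monotone convergence along the truncations [trunc k u], which increase pointwise to [u]. *)
Lemma energy_le_of_trunc u K : (forall k : nat, L2 (trunc k%:R u)) ->
  (forall k : nat, norm2 (trunc k%:R u) <= K) -> (energy u <= (K ^+ 2)%:E)%E.
Proof.
move=> L2trunc le_K.
pose g k t := (sqnorm (trunc k%:R u) t)%:E.
have mg k : measurable_fun setT (g k).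
  by apply/measurable_EFinP; apply: measurable_vdot; case: (L2trunc k).
have g_ge0 k t : setT t -> (0 <= g k t)%E by move=> _; rewrite lee_fin vdot_ge0.
have g_nd t : setT t -> {homo g^~ t : k m / (k <= m)%N >-> (k <= m)%E}.
  move=> _ k m km; rewrite /g !sqnorm_trunc lee_fin.
  case: ifP => tk; last by case: ifP => // _; exact: vdot_ge0.
  by rewrite ifT //; apply: le_trans tk _; rewrite ler_nat.
have g_cvg := cvg_monotone_convergence (mu := mu) measurableT mg g_ge0 g_nd.
have -> : energy u = (\int[mu]_(t in setT) limn (g^~ t))%E.
  apply: eq_integral => t _; apply/esym/cvg_lim => //; apply: cvg_near_cst.
  by near=> k; rewrite /g /sqnorm (near (trunc_nat_near u t) k).
rewrite -(cvg_lim _ g_cvg) //; apply: lime_le; first exact: cvgP g_cvg.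
apply: nearW => k; have -> : (\int[mu]_(t in setT) g k t)%E = energy (trunc k%:R u) by [].
rewrite energyE // lee_fin; have := le_K k; have := norm2_ge0 (trunc k%:R u); nra.
Unshelve. all: by end_near.
Qed.

Lemma L2p_norm2_le_of_trunc u K : (forall T, 0 <= T -> L2p (trunc T u)) ->
  (forall T, 0 <= T -> norm2 (trunc T u) <= K) -> L2p u /\ norm2 u <= K.
Proof.
move=> L2p_trunc_u le_K.
have K_ge0 : 0 <= K := le_trans (norm2_ge0 _) (le_K 0 (lexx 0)).
have L2trunc k : L2 (trunc k%:R u) by case: (L2p_trunc_u _ (ler0n _ k)).
have E_le := energy_le_of_trunc L2trunc (fun k => le_K _ (ler0n _ k)).
have mu_ : sig_measurable u by apply: sig_measurable_of_trunc => k; case: (L2trunc k).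
have L2u : L2 u by split => //; exact: le_lt_trans E_le (ltry _).
split.
  split => // t t_lt0; have := (L2p_trunc_u 0 (lexx 0)).2 t t_lt0.
  by rewrite /trunc ifT // ltW.
by move: E_le; rewrite energyE // lee_fin; have := norm2_ge0 u; nra.
Qed.

Lemma exists_nonzero_trunc u : L2p u -> nonzero u ->
  exists T, 0 <= T /\ nonzero (trunc T u).
Proof.
move=> L2pu nz_u; apply: contrapT => no_T.
have [_ u_le0] : L2p u /\ norm2 u <= 0.
  apply: L2p_norm2_le_of_trunc => T T_ge0; first exact: L2p_trunc.
  apply: contrapT => hT; apply: no_T; exists T; split => //.
  by rewrite /nonzero; apply: contra_notN hT => /eqP ->.
by move: nz_u; rewrite /nonzero eq_le u_le0 norm2_ge0.
Qed.

Lemma exists_L2p_bump T d : (0 < n)%N -> 0 <= T -> 0 <= d ->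
  exists s : signal, [/\ L2p s, (forall t, t <= T -> s t = 0) & norm2 s = d].
Proof.
move=> n_gt0 T_ge0 d_ge0.
pose i0 : 'I_n := Ordinal n_gt0.
pose A : set R := [set` `]T, T + 1]].
pose c : 'I_n -> R := fun i => if i == i0 then d else 0.
pose s : signal := fun t i => \1_A t * c i.
have s_le_T t : t <= T -> s t = 0.
  move=> tT; apply/funext => i; rewrite /s indicE memNset ?mul0r //.
  by rewrite /A /= in_itv /= ltNge tT.
have cc : vdot c c = d ^+ 2.
  rewrite /vdot (bigD1 i0) //= big1 ?addr0; first by rewrite /c eqxx expr2.
  by move=> i /negbTE i_neq0; rewrite /c i_neq0 mul0r.
have sqnorm_s t : sqnorm s t = \1_A t * d ^+ 2.
  rewrite /sqnorm /s -cc /vdot mulr_sumr; apply: eq_bigr => i _.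
  by rewrite indicE; case: (t \in A); rewrite ?mul1r ?mul0r.
have mA : measurable A by exact: measurable_itv.
have ms : sig_measurable s.
  by move=> i; apply: measurable_funM => //; exact: measurable_indic.
have Es : energy s = (d ^+ 2)%:E.
  transitivity (\int[mu]_(t in A) (cst (d ^+ 2)%:E) t)%E; last first.
    have muA : mu A = 1%:E.
      rewrite (@lebesgue_measure_itv R (Interval (BRight T) (BRight (T + 1)))) /=.
      rewrite ifT; last by rewrite lte_fin; lra.
      by rewrite -EFinB (_ : T + 1 - T = 1) //; lra.
    by rewrite (integral_cst mu mA) -[RHS]mule1; congr (_ * _)%E; exact: muA.
  rewrite [RHS]integral_mkcond; apply: eq_integral => t _.
  have := sqnorm_s t; rewrite /sqnorm => ->.
  by rewrite patchE indicE; case: (t \in A); rewrite ?mul1r ?mul0r.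
exists s; split => //.
  split; first by split => //; rewrite Es ltry.
  by move=> t t_lt0; apply: s_le_T; lra.
by rewrite /norm2 Es /= sqrtr_sqr ger0_norm.
Qed.

End TruncationLimit.

Section StableSystem.
Variables (R : realType) (n : nat).
Hypothesis n_gt0 : (0 < n)%N.
Local Notation signal := (signal R n).
Variable C : signal -> signal.
Hypothesis stable_C : stable C.

(* The gain bound only covers inputs of nonzero norm. A null input [y] is handled by adding a
   bump of norm [dl] after time [T]: by causality this does not change [C y] up to [T]. *)
Lemma stable_norm2_eq0 y : L2p y -> norm2 y = 0 -> norm2 (C y) = 0.
Proof.
move=> L2py y0; have [_ C_causal L2C [M gainC]] := stable_C.
suff [_ Cy_le0] : L2p (C y) /\ norm2 (C y) <= 0.
  by apply/eqP; rewrite eq_le Cy_le0 norm2_ge0.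
apply: L2p_norm2_le_of_trunc => T T_ge0; first exact/L2p_trunc/L2C.
apply/ler_addgt0Pr => e e_gt0; rewrite add0r.
pose dl := e / (`|M| + 1).
have dl_gt0 : 0 < dl by rewrite divr_gt0 // ltr_pwDr.
have [s [L2ps s_le_T s_dl]] := exists_L2p_bump n_gt0 T_ge0 (ltW dl_gt0).
pose v := sig_add y s.
have L2pv : L2p v := L2p_add L2py L2ps.
have vT : trunc T v = trunc T y.
  apply/funext => t; rewrite /trunc /v /sig_add; case: ifP => // tT.
  by rewrite (s_le_T t tT); apply/funext => i; rewrite addr0.
have v_le : norm2 v <= dl.
  by have := norm2D_le L2py.1 L2ps.1; rewrite y0 add0r s_dl.
have v_gt0 : 0 < norm2 v.
  have vs : inner v s = dl ^+ 2.
    rewrite /v (innerDl L2py.1 L2ps.1 L2ps.1) (inner_norm2_eq0 L2py.1 L2ps.1 y0).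
    by rewrite add0r -norm2_sqr s_dl.
  have := inner_le L2pv.1 L2ps.1; rewrite vs s_dl expr2 ler_pM2r //.
  exact: lt_le_trans.
have -> : trunc T (C y) = trunc T (C v).
  by rewrite (C_causal T y T_ge0 (L2p_L2ep L2py)) -vT -(C_causal T v T_ge0 (L2p_L2ep L2pv)).
apply: le_trans (norm2_trunc_le T (L2C v L2pv).1) _.
have := gainC v L2pv; rewrite /nonzero gt_eqF // ler_pdivrMr // => /(_ isT) Cv_le.
apply: le_trans Cv_le _; apply: le_trans (_ : `|M| * norm2 v <= _).
  by rewrite ler_wpM2r ?norm2_ge0 // ler_norm.
apply: le_trans (_ : `|M| * dl <= _); first by rewrite ler_wpM2l.
by rewrite /dl mulrA ler_pdivrMr ?ltr_pwDr //; nra.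
Qed.

Lemma stable_norm2_le :
  exists2 M, 0 <= M & forall u, L2p u -> norm2 (C u) <= M * norm2 u.
Proof.
have [_ _ _ [M gainC]] := stable_C.
exists `|M| => // u L2pu; have [u0|nz_u] := eqVneq (norm2 u) 0.
  by rewrite (stable_norm2_eq0 L2pu u0) u0 mulr0.
have := gainC u L2pu nz_u; rewrite ler_pdivrMr ?nonzero_gt0 // => /le_trans; apply.
by rewrite ler_wpM2r ?norm2_ge0 // ler_norm.
Qed.

End StableSystem.

Section SingularAngle.
Variables (R : realType) (n : nat).
Local Notation signal := (signal R n).

Definition cone_bounded (a : R) (P : signal -> signal) :=
  forall u, L2p u -> cos a * (norm2 u * norm2 (P u)) <= inner u (P u).

Variable P : signal -> signal.
Hypothesis L2P : forall u, L2p u -> L2p (P u).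

Lemma angle_ratio_bounds r : angle_ratios P r -> -1 <= r <= 1.
Proof.
case=> u [L2pu nz_u nz_Pu ->].
have uPu_gt0 : 0 < norm2 u * norm2 (P u) by rewrite mulr_gt0 ?nonzero_gt0.
rewrite ler_pdivlMr // ler_pdivrMr // mulN1r mul1r -ler_norml.
exact: cauchy_schwarz L2pu.1 (L2P L2pu).1.
Qed.

Lemma inf_angle_ratios_bounds :
  (exists r, angle_ratios P r) -> -1 <= inf (angle_ratios P) <= 1.
Proof.
move=> [r Pr].
have lb : lbound (angle_ratios P) (-1) by move=> s /angle_ratio_bounds /andP[].
rewrite lb_le_inf //=; last by exists r.
apply: le_trans (ge_inf _ Pr) _; first by exists (-1).
by have /andP[] := angle_ratio_bounds Pr.
Qed.

(* [inf set0 = 0], so an empty set of ratios means [singular_angle P = pi / 2]. *)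
Lemma angle_ratios_nonempty :
  singular_angle P < pi / 2 -> exists r, angle_ratios P r.
Proof.
rewrite /singular_angle => angle_lt; apply: contrapT => no_ratio; move: angle_lt.
have -> : angle_ratios P = set0.
  by apply/seteqP; split => // r Pr; apply: no_ratio; exists r.
by rewrite inf0 acos0 ltxx.
Qed.

Lemma cone_bounded_of_singular_angle_le a :
  a \in `[0, pi] -> singular_angle P <= a -> cone_bounded a P.
Proof.
move=> a_itv angle_le u L2pu; have L2pPu := L2P L2pu.
have [u0|nz_u] := eqVneq (norm2 u) 0.
  by rewrite u0 mul0r mulr0 (inner_norm2_eq0 L2pu.1 L2pPu.1 u0).
have [Pu0|nz_Pu] := eqVneq (norm2 (P u)) 0.
  by rewrite Pu0 !mulr0 innerC (inner_norm2_eq0 L2pPu.1 L2pu.1 Pu0).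
have Pr : angle_ratios P (inner u (P u) / (norm2 u * norm2 (P u))) by exists u.
have inf_itv := inf_angle_ratios_bounds (ex_intro _ _ Pr).
have acos_itv : acos (inf (angle_ratios P)) \in `[0, pi].
  by rewrite in_itv /= acos_ge0 ?acos_lepi.
have cos_le_inf : cos a <= inf (angle_ratios P).
  rewrite -[leRHS](acosK (x := inf _)) ?in_itv //=.
  move: angle_le; rewrite /singular_angle le_eqVlt => /orP[/eqP -> //|lt_a].
  by apply: ltW; rewrite ltr_cos.
rewrite -ler_pdivlMr ?mulr_gt0 ?nonzero_gt0 //.
apply: le_trans cos_le_inf (ge_inf _ Pr).
by exists (-1) => s /angle_ratio_bounds /andP[].
Qed.

Lemma singular_angle_le_of_cone_bounded a : a \in `[0, pi] ->
  (exists r, angle_ratios P r) -> cone_bounded a P -> singular_angle P <= a.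
Proof.
move=> a_itv [r0 Pr0] coneP.
have cos_lb : lbound (angle_ratios P) (cos a).
  move=> _ [u [L2pu nz_u nz_Pu ->]].
  by rewrite ler_pdivlMr ?mulr_gt0 ?nonzero_gt0 //; exact: coneP.
have inf_itv := inf_angle_ratios_bounds (ex_intro _ _ Pr0).
have cos_le_inf : cos a <= inf (angle_ratios P) by rewrite lb_le_inf //; exists r0.
have acos_itv : acos (inf (angle_ratios P)) \in `[0, pi].
  by rewrite in_itv /= acos_ge0 ?acos_lepi.
rewrite /singular_angle leNgt; apply/negP => lt_a.
have : cos (acos (inf (angle_ratios P))) < cos a by rewrite ltr_cos.
by rewrite acosK ?in_itv // ltNge cos_le_inf.
Qed.

End SingularAngle.

Section ClosedLoop.
Variables (R : realType) (n : nat) (alpha : R).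
Local Notation signal := (signal R n).
Local Notation sig0 := (@sig0 R n).
Variables (P C : signal -> signal) (Finv : signal * signal -> signal * signal).
Hypotheses (n_gt0 : (0 < n)%N) (alpha_ge0 : 0 <= alpha) (alpha_lt : alpha < pi / 2).
Hypotheses (stable_P : stable P) (stable_C : stable C).
Hypotheses (angle_P : singular_angle P <= alpha) (angle_C : singular_angle C <= alpha).
Hypothesis Finv_inverse : causal_inverse_of P C Finv.

Local Notation G := (closed_loop P Finv).

(* The signal [u1 = e1 - y2] entering [P] when [e2 = 0]; by definition [G e = P (plant_input e)]. *)
Definition plant_input (e : signal) : signal := (Finv (e, sig0)).1.

Let L2P u : L2p u -> L2p (P u). Proof. by case: stable_P => _ _ + _; apply. Qed.
Let L2C u : L2p u -> L2p (C u). Proof. by case: stable_C => _ _ + _; apply. Qed.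

Let alpha_itv : alpha \in `[0, pi].
Proof.
rewrite in_itv /= alpha_ge0 /=; apply/ltW/(lt_trans alpha_lt).
by have := @pi_gt0 R; lra.
Qed.

Let cos_alpha_gt0 : 0 < cos alpha.
Proof.
apply: cos_gt0_pihalf; rewrite alpha_lt andbT; apply: lt_le_trans alpha_ge0.
by rewrite oppr_lt0; have := @pi_gt0 R; lra.
Qed.

Let cone_P : cone_bounded alpha P := cone_bounded_of_singular_angle_le L2P alpha_itv angle_P.
Let cone_C : cone_bounded alpha C := cone_bounded_of_singular_angle_le L2C alpha_itv angle_C.

Lemma plant_input_L2ep e : L2ep e -> L2ep (plant_input e).
Proof.
by case: Finv_inverse => L2ep_F _ _ _ L2ep_e; case: (L2ep_F (e, sig0) (conj L2ep_e L2ep_sig0)).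
Qed.

Lemma plant_inputE e : L2ep e -> e = sig_add (plant_input e) (C (P (plant_input e))).
Proof.
move=> L2ep_e; have [_ loop_inv _ _] := Finv_inverse.
have := loop_inv (e, sig0) (conj L2ep_e L2ep_sig0).
rewrite /loop_map /plant_input; case: (Finv (e, sig0)) => u y /= [eE y0].
have yE : y = P u.
  apply/funext => t; apply/funext => i; apply/eqP; rewrite -subr_eq0; apply/eqP.
  exact: (congr1 (fun f => f t i) y0).
by rewrite -eE yE.
Qed.

Lemma trunc_plant_inputE e T : L2ep e -> 0 <= T ->
  trunc T e = sig_add (trunc T (plant_input e))
                      (trunc T (C (trunc T (P (trunc T (plant_input e)))))).
Proof.
move=> L2ep_e T_ge0; have [[L2epP _ _] P_causal _ _] := stable_P.
have [_ C_causal _ _] := stable_C.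
have L2ep_u := plant_input_L2ep L2ep_e.
rewrite {1}(plant_inputE L2ep_e) trunc_add; congr sig_add.
by rewrite (C_causal T _ T_ge0 (L2epP _ L2ep_u)) (P_causal T _ T_ge0 L2ep_u).
Qed.

(* With [x] the truncated plant input and [y], [z] the truncated outputs of [P] and [C],
   [trunc T e = x + z], [<x, y>] is bounded below by the cone condition on [P] and
   [<z, y> = <y, C y>] is nonnegative by the cone condition on [C]. *)
Lemma trunc_plant_input_le e T : L2p e -> 0 <= T ->
  cos alpha * norm2 (trunc T (plant_input e)) <= norm2 e.
Proof.
move=> L2pe T_ge0; have eT := trunc_plant_inputE (L2p_L2ep L2pe) T_ge0.
have L2px := plant_input_L2ep (L2p_L2ep L2pe) T_ge0.
move: eT L2px; set x := trunc T (plant_input e) => eT L2px.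
set y := trunc T (P x); set z := trunc T (C y).
have L2pPx := L2P L2px; have L2py : L2p y := L2p_trunc T L2pPx.
have L2pz : L2p z := L2p_trunc T (L2C L2py).
have L2peT := L2p_trunc T L2pe.
have eT_le : norm2 (trunc T e) <= norm2 e := norm2_trunc_le T L2pe.1.
have [y0|nz_y] := eqVneq (norm2 y) 0.
  have z0 : norm2 z = 0.
    apply/eqP; rewrite eq_le norm2_ge0 andbT -(stable_norm2_eq0 n_gt0 stable_C L2py y0).
    exact: norm2_trunc_le (L2C L2py).1.
  rewrite (le_trans (ler_piMl (norm2_ge0 x) (cos_le1 alpha))) // (le_trans _ eT_le) // eT.
  exact: norm2_le_addr_null L2px.1 L2pz.1 z0.
have xy : cos alpha * norm2 x * norm2 y <= inner x y.
  have -> : inner x y = inner x (P x) by rewrite /x /y [RHS]inner_truncl.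
  apply: le_trans (cone_P L2px); rewrite -mulrA.
  apply: ler_wpM2l; first exact: ltW.
  apply: ler_wpM2l; first exact: norm2_ge0.
  exact: norm2_trunc_le L2pPx.1.
have zy : 0 <= inner z y.
  have -> : inner z y = inner y (C y) by rewrite [RHS]innerC /z /y [RHS]inner_truncr.
  by apply: le_trans (cone_C L2py); rewrite !mulr_ge0 ?norm2_ge0 ?ltW.
have exy : inner (trunc T e) y = inner x y + inner z y.
  by rewrite eT (innerDl L2px.1 L2pz.1 L2py.1).
have := inner_le L2peT.1 L2py.1; rewrite exy => ey_le.
have y_ge0 := norm2_ge0 y; have eT_ge0 := norm2_ge0 (trunc T e).
have : cos alpha * norm2 x * norm2 y <= norm2 e * norm2 y by nra.
by rewrite ler_pM2r ?nonzero_gt0.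
Qed.

Lemma plant_input_bound e : L2p e ->
  L2p (plant_input e) /\ norm2 (plant_input e) <= norm2 e / cos alpha.
Proof.
move=> L2pe; apply: L2p_norm2_le_of_trunc => T T_ge0.
  exact: plant_input_L2ep (L2p_L2ep L2pe) _ T_ge0.
by rewrite ler_pdivlMr // mulrC; exact: trunc_plant_input_le.
Qed.

Lemma closed_loop_L2p e : L2p e -> L2p (G e).
Proof. by move=> /plant_input_bound[/L2P]. Qed.

Lemma closed_loop_norm2_le :
  exists2 M, 0 <= M & forall e, L2p e -> norm2 (G e) <= M * norm2 e.
Proof.
have [MP MP_ge0 gainP] := stable_norm2_le n_gt0 stable_P.
exists (MP / cos alpha) => [|e L2pe]; first exact: divr_ge0 (ltW _).
have [L2pu u_le] := plant_input_bound L2pe.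
apply: le_trans (gainP _ L2pu) _.
by rewrite -mulrA [_^-1 * _]mulrC ler_wpM2l.
Qed.

Lemma closed_loop_cone : cone_bounded alpha G.
Proof.
move=> e L2pe; rewrite /closed_loop -/(plant_input e).
have eE := plant_inputE (L2p_L2ep L2pe); have [L2pu _] := plant_input_bound L2pe.
move: eE L2pu; set u := plant_input e => eE L2pu.
have L2pPu := L2P L2pu; have L2pCPu := L2C L2pPu.
have inner_e : inner e (P u) = inner u (P u) + inner (C (P u)) (P u).
  by rewrite {1}eE (innerDl L2pu.1 L2pCPu.1 L2pPu.1).
have e_le : norm2 e <= norm2 u + norm2 (C (P u)).
  by rewrite {1}eE; exact: norm2D_le L2pu.1 L2pCPu.1.
have := cone_P L2pu; have := cone_C L2pPu; rewrite [inner (P u) _]innerC inner_e.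
have : cos alpha * norm2 (P u) * norm2 e
       <= cos alpha * norm2 (P u) * (norm2 u + norm2 (C (P u))).
  by rewrite ler_wpM2l // mulr_ge0 ?norm2_ge0 ?ltW.
nra.
Qed.

Lemma closed_loop_witness : exists e, [/\ L2p e, nonzero e & nonzero (G e)].
Proof.
have [_ [u0 [L2pu0 _ nz_Pu0 _]]] :=
  angle_ratios_nonempty (le_lt_trans angle_P alpha_lt).
have [_ _ inv_loop _] := Finv_inverse.
pose e := sig_add u0 (C (P u0)).
have Ge : G e = P u0.
  have w_L2ep : L2ep2 (u0, P u0) by split; apply: L2p_L2ep => //; exact: L2P.
  have := inv_loop _ w_L2ep.
  have -> : loop_map P C (u0, P u0) = (e, sig0).
    by congr pair; apply/funext => t; apply/funext => i; rewrite subrr.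
  by rewrite /closed_loop => ->.
have L2pe : L2p e := L2p_add L2pu0 (L2C (L2P L2pu0)).
exists e; split; rewrite ?Ge //.
have [M _ gainG] := closed_loop_norm2_le.
apply/eqP => e0; move/eqP: nz_Pu0; apply; apply/eqP.
by rewrite eq_le norm2_ge0 andbT -Ge; apply: le_trans (gainG _ L2pe) _; rewrite e0 mulr0.
Qed.

Lemma closed_loop_is_system : is_system G.
Proof.
have [[L2epP P0 _] _ _ _] := stable_P; have [[_ C0 _] _ _ _] := stable_C.
have [_ _ inv_loop _] := Finv_inverse.
split.
- by move=> e L2ep_e; apply: L2epP; exact: plant_input_L2ep.
- have := inv_loop (sig0, sig0) (conj L2ep_sig0 L2ep_sig0).
  have -> : loop_map P C (sig0, sig0) = (sig0, sig0).
    rewrite /loop_map /= C0 P0.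
    by congr pair; apply/funext => t; apply/funext => i; rewrite ?addr0 ?subr0.
  by rewrite /closed_loop => ->.
- have [e [L2pe _ nz_Ge]] := closed_loop_witness.
  exists e; split; first exact: L2p_L2ep.
  exact: exists_nonzero_trunc (closed_loop_L2p L2pe) nz_Ge.
Qed.

Lemma closed_loop_causal : causal G.
Proof.
move=> T e T_ge0 L2ep_e; have [_ P_causal _ _] := stable_P.
have [_ _ _ F_causal] := Finv_inverse.
have L2ep_eT : L2ep (trunc T e) := L2p_L2ep (L2ep_e T T_ge0).
rewrite /closed_loop (P_causal T _ T_ge0 (plant_input_L2ep L2ep_e)).
rewrite (P_causal T _ T_ge0 (plant_input_L2ep L2ep_eT)).
have := F_causal T (e, sig0) T_ge0 (conj L2ep_e L2ep_sig0).
by rewrite /trunc2 /= trunc_sig0 => /(congr1 fst) /= ->.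
Qed.

Lemma closed_loop_stable : stable G.
Proof.
have [M _ gainG] := closed_loop_norm2_le.
split; [exact: closed_loop_is_system | exact: closed_loop_causal | exact: closed_loop_L2p |].
by exists M => e L2pe nz_e; rewrite ler_pdivrMr ?nonzero_gt0 // gainG.
Qed.

Lemma closed_loop_singular_angle : singular_angle G <= alpha.
Proof.
apply: (singular_angle_le_of_cone_bounded closed_loop_L2p alpha_itv _ closed_loop_cone).
have [e [L2pe nz_e nz_Ge]] := closed_loop_witness.
by exists (inner e (G e) / (norm2 e * norm2 (G e))), e.
Qed.

End ClosedLoop.

Theorem proposition6 (R : realType) (n : nat) (alpha : R)
  (P C : signal R n -> signal R n)
  (Finv : signal R n * signal R n -> signal R n * signal R n) :
  (0 < n)%N -> 0 <= alpha -> alpha < pi / 2 ->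
  stable P -> stable C ->
  singular_angle P <= alpha -> singular_angle C <= alpha ->
  causal_inverse_of P C Finv ->
  stable (closed_loop P Finv) /\ singular_angle (closed_loop P Finv) <= alpha.
Proof.
move=> n_gt0 alpha_ge0 alpha_lt stable_P stable_C angle_P angle_C Finv_inverse.
split.
- exact: (closed_loop_stable n_gt0 alpha_ge0 alpha_lt
            stable_P stable_C angle_P angle_C Finv_inverse).
- exact: (closed_loop_singular_angle n_gt0 alpha_ge0 alpha_lt
            stable_P stable_C angle_P angle_C Finv_inverse).
Qed.
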